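(* Let $\Bbbk$ be algebraically closed, $T$ a torus acting linearly on a finite-dimensional $\Bbbk$-vector space $V$, $X\subseteq\mathbb PV$ a closed $T$-invariant subscheme with $X^T$ finite, and $S:\mathbb G_m\to T$ with $X^S=X^T$. If $Y\subseteq X$ is an irreducible component, then its unique supporting fixed point $\min(Y)$ is also a supporting fixed point of $X$. In particular, for every $f\in X^T$, every irreducible component of $\overline{X_f}$ contains $f$.
   Context: For a closed $S$-invariant subset $Z\subseteq X$ and $f\in Z^T$, $Z_f=\{z\in Z:\lim_{t\to0}S(t)\cdot z=f\}$ is the B-B stratum. A point $f\in Z^T$ is a supporting fixed point of $Z$ if $Z_f$ contains a nonempty open subset of $Z$. An irreducible $Y$ has exactly one supporting fixed point, denoted $\min(Y)$. *)

From HB Require Import structures.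
From mathcomp Require Import all_boot all_order all_algebra.
From mathcomp Require Import mpoly.
Set Implicit Arguments. Unset Strict Implicit. Unset Printing Implicit Defensive.
Import Order.TTheory GRing.Theory Num.Theory.
Local Open Scope ring_scope.

(* Setting: K algebraically closed, V = K^n with a fixed basis, P(V) = nonzero
   vectors of K^n up to nonzero scaling.  A torus T = (K^* )^r acts linearly on V;
   a linear action of a torus is diagonalizable, so in a suitable basis the
   action is t . x = (chi_i(t) x_i)_i for characters chi_i = w i : Z^r.
   Subsets of P(V) are represented by predicates on vectors (cones). *)

Section Defs.
Variables (K : closedFieldType) (n r : nat) (w : 'I_n -> 'I_r -> int).

Definition vec := 'I_n -> K.

Definition proj (x y : vec) : Prop :=
  (exists i, x i != 0) /\ exists c : K, c != 0 /\ forall i, y i = c * x i.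

Definition torus_elt (t : 'I_r -> K) : Prop := forall j, t j != 0.

Definition chi (i : 'I_n) (t : 'I_r -> K) : K := \prod_(j < r) (t j ^ (w i j)).

Definition act (t : 'I_r -> K) (x : vec) : vec := fun i => chi i t * x i.

Definition Sof (lam : 'I_r -> int) (s : K) : 'I_r -> K := fun j => s ^ lam j.

Definition pset := vec -> Prop.

Definition pfinite (A : pset) : Prop :=
  exists s : seq vec, forall f, A f ->
    exists i : 'I_(size s), proj f (nth (fun _ => 0) s i).
Definition subset (A B : pset) : Prop := forall x, A x -> B x.

Definition zclosed (C : pset) : Prop :=
  exists E : mpoly.mpoly n K -> Prop,
    (forall p, E p -> exists d : nat, p \is [in K[n], d.-homog]) /\
    forall x, C x <-> ((exists i, x i != 0) /\ forall p, E p -> mpoly.meval x p = 0).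

Definition open_in (Z U : pset) : Prop :=
  exists C, zclosed C /\ forall x, U x <-> (Z x /\ ~ C x).

Definition zclosure (A : pset) : pset :=
  fun x => (exists i, x i != 0) /\ forall C, zclosed C -> subset A C -> C x.

Definition irreducible (Y : pset) : Prop :=
  (exists y, Y y) /\
  forall C1 C2, zclosed C1 -> zclosed C2 ->
    subset Y (fun x => C1 x \/ C2 x) -> subset Y C1 \/ subset Y C2.

Definition irr_component (Z Y : pset) : Prop :=
  zclosed Y /\ irreducible Y /\ subset Y Z /\
  forall Y', zclosed Y' -> irreducible Y' -> subset Y Y' -> subset Y' Z -> subset Y' Y.

Definition Tfixed (Z : pset) (f : vec) : Prop :=
  Z f /\ forall t, torus_elt t -> proj f (act t f).

Definition Sfixed (lam : 'I_r -> int) (Z : pset) (f : vec) : Prop :=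
  Z f /\ forall s : K, s != 0 -> proj f (act (Sof lam s) f).

(* lim_{s -> 0} S(s).z = f : the orbit map G_m -> P(V), s |-> S(s).z, extends
   to a morphism A^1 -> P(V) (given by polynomials p_i without common zero)
   whose value at 0 is f. *)
Definition limit0 (lam : 'I_r -> int) (z f : vec) : Prop :=
  exists p : 'I_n -> {poly K},
    (forall a : K, exists i, (p i).[a] != 0) /\
    (forall s : K, s != 0 -> proj (act (Sof lam s) z) (fun i => (p i).[s])) /\
    proj f (fun i => (p i).[0]).

Definition BBstratum (lam : 'I_r -> int) (Z : pset) (f : vec) : pset :=
  fun z => Z z /\ limit0 lam z f.

Definition supporting (lam : 'I_r -> int) (Z : pset) (f : vec) : Prop :=
  Tfixed Z f /\
  exists U, open_in Z U /\ (exists u, U u) /\ subset U (BBstratum lam Z f).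

End Defs.

(* The polynomial ring is Noetherian (Dickson's lemma and Hilbert's basis
   theorem, via leading monomials), so every closed subset of P(V) is a finite
   union of irreducible closed subsets; hence an irreducible component [Y] of
   a closed set [W] has a closed [Z] with [W] inside [Y \/ Z] and [Y] not
   inside [Z].  For the first claim, the given open subset of [Y_f] minus [Z]
   is open in [X], nonempty by irreducibility of [Y], and contained in [X_f].
   For the second, let [Y] be a component of the closure of [X_f] and pick
   [a] in [X_f] outside [Z].  The orbit [s |-> S(s).a] extends to a polynomial
   curve [A^1 -> P(V)] with value [f] at [0], whose points over [s <> 0] lie
   in [X_f], hence in [Y \/ Z]; as the curve leaves [Z] at [s = 1], it lies in
   [Y] entirely, so [f] is in [Y]. *)

From Pilot Require Import Defs.
From mathcomp Require Import all_boot all_order all_algebra.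
From mathcomp Require Import mpoly.
From Stdlib Require Import Classical IndefiniteDescription FunctionalExtensionality.
Import Order.TTheory GRing.Theory.
Local Open Scope ring_scope.
Set Implicit Arguments. Unset Strict Implicit. Unset Printing Implicit Defensive.
Local Notation psubset := Defs.subset.

Lemma exists_min_after (a : nat -> nat) p :
  exists j, (p < j)%N /\ forall j', (p < j')%N -> (a j <= a j')%N.
Proof.
suff min_below v : forall j, (p < j)%N -> (a j <= v)%N ->
    exists j0, (p < j0)%N /\ forall j', (p < j')%N -> (a j0 <= a j')%N.
  exact: (min_below (a p.+1) p.+1).
elim: v => [|v IHv] j pj ajv.
  by exists j; split=> // j' _; move: ajv; rewrite leqn0 => /eqP ->.
have [[j' pj' aj'v] | no_smaller] :=
  classic (exists2 j', (p < j')%N & (a j' <= v)%N); first exact: IHv pj' aj'v.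
exists j; split=> // j' pj'; rewrite leqNgt; apply/negP => aj'j.
by apply: no_smaller; exists j' => //; rewrite -ltnS (leq_trans aj'j ajv).
Qed.

Lemma exists_nondecreasing_subseq (a : nat -> nat) : exists psi : nat -> nat,
  (forall i, (psi i < psi i.+1)%N) /\ (forall i, (a (psi i) <= a (psi i.+1))%N).
Proof.
have [next next_min] := functional_choice _ (fun p => exists_min_after a p).
have next_gt p : (p < next p)%N by case: (next_min p).
exists (fun i => iter i.+1 next 0%N); split=> i /=; first exact: next_gt.
by case: (next_min (iter i next 0%N)) => _; apply; apply: ltn_trans (next_gt _) _.
Qed.

Lemma dickson_prefix n (m : nat -> 'X_{1..n}) k : exists phi : nat -> nat,
  (forall i, (phi i < phi i.+1)%N) /\
  forall i (c : 'I_n), (c < k)%N -> (m (phi i) c <= m (phi i.+1) c)%N.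
Proof.
elim: k => [|k [phi [phi_incr phi_le]]]; first by exists id.
have [nk|kn] := ltnP k n; last first.
  by exists phi; split=> // i c ck; apply: phi_le; apply: leq_trans kn.
have [psi [psi_incr psi_le]] := exists_nondecreasing_subseq (fun i => m (phi i) (Ordinal nk)).
exists (phi \o psi); split=> [i|i c]; first exact: homo_ltn ltn_trans phi_incr _ _ (psi_incr i).
rewrite ltnS leq_eqVlt => /orP [/eqP ck|ck].
  have -> : c = Ordinal nk by apply: val_inj.
  exact: psi_le.
exact: (homo_leq leqnn leq_trans (fun j => phi_le j c ck)) (ltnW (psi_incr i)).
Qed.

Lemma dickson n (m : nat -> 'X_{1..n}) : exists i j, (i < j)%N /\ (m i <= m j)%MM.
Proof.
have [phi [phi_incr phi_le]] := dickson_prefix m n.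
by exists (phi 0%N), (phi 1%N); split=> //; apply/mnm_lepP => c; apply: phi_le.
Qed.

Section HilbertBasis.
Variables (K : fieldType) (n : nat) (q : nat -> {mpoly K[n]}).

Definition prefix_ideal k (f : {mpoly K[n]}) :=
  exists a : nat -> {mpoly K[n]}, f = \sum_(0 <= j < k) a j * q j.

Lemma prefix_ideal0 k : prefix_ideal k 0.
Proof. by exists (fun _ => 0); rewrite big1 // => j _; rewrite mul0r. Qed.

Lemma prefix_idealD k f g : prefix_ideal k f -> prefix_ideal k g -> prefix_ideal k (f + g).
Proof.
move=> [a ->] [b ->]; exists (fun j => a j + b j).
by rewrite -big_split /=; apply: eq_bigr => j _; rewrite mulrDl.
Qed.

Lemma prefix_idealMl k c f : prefix_ideal k f -> prefix_ideal k (c * f).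
Proof.
move=> [a ->]; exists (fun j => c * a j).
by rewrite mulr_sumr; apply: eq_bigr => j _; rewrite mulrA.
Qed.

Lemma prefix_idealZ k c f : prefix_ideal k f -> prefix_ideal k (c *: f).
Proof. by rewrite -mul_mpolyC; apply: prefix_idealMl. Qed.

Lemma prefix_idealS k f : prefix_ideal k f -> prefix_ideal k.+1 f.
Proof.
move=> [a ->]; exists (fun j => if (j < k)%N then a j else 0).
rewrite big_nat_recr //= ltnn mul0r addr0.
by apply: eq_big_nat => j /andP [_ ->].
Qed.

Lemma prefix_ideal_mono k k' f : (k <= k')%N -> prefix_ideal k f -> prefix_ideal k' f.
Proof.
move=> /subnKC <-; elim: (k' - k)%N => [|d IHd] fI; first by rewrite addn0.
by rewrite addnS; apply/prefix_idealS/IHd.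
Qed.

Lemma prefix_ideal_gen k : prefix_ideal k.+1 (q k).
Proof.
exists (fun j => (j == k)%:R).
rewrite big_nat_recr //= eqxx mul1r big1_seq ?add0r // => j.
by rewrite mem_index_iota => /andP [_ /ltn_eqF ->]; rewrite mul0r.
Qed.

Definition lead_ideal k (m : 'X_{1..n}) :=
  exists g, [/\ prefix_ideal k g, g != 0 & (mlead g <= m)%MM].

Lemma lead_idealS k m m' : lead_ideal k m -> (m <= m')%MM -> lead_ideal k m'.
Proof. by move=> [g [gI gn0 gm]] mm'; exists g; split=> //; apply: lepm_trans mm'. Qed.

Lemma lead_ideal_mono k k' m : (k <= k')%N -> lead_ideal k m -> lead_ideal k' m.
Proof. by move=> kk' [g [gI gn0 gm]]; exists g; split=> //; apply: prefix_ideal_mono gI. Qed.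

(* Division by an element of [prefix_ideal k] with the same leading monomial
   strictly decreases the leading monomial; conclude by well-founded induction. *)
Lemma prefix_ideal_step k : (forall m, lead_ideal k.+1 m -> lead_ideal k m) ->
  forall f, prefix_ideal k.+1 f -> prefix_ideal k f.
Proof.
move=> lead_eq f; move: {2}(mlead f) (erefl (mlead f)) => mf.
elim/(well_founded_ind (@ltom_wf n)): mf f => mf IH f ef fI.
have [->|fn0] := eqVneq f 0; first exact: prefix_ideal0.
have [g [gI gn0 /submK lg]] : lead_ideal k (mlead f).
  by apply: lead_eq; exists f; split=> //; apply: lepm_refl.
pose g' := 'X_[mlead f - mlead g] * g.
have Xn0 : 'X_[mlead f - mlead g] != 0 :> {mpoly K[n]}.
  by rewrite -mleadc_eq0 mleadXm mcoeffX eqxx oner_eq0.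
have g'n0 : g' != 0 by rewrite mulf_neq0.
have lg' : mlead g' = mlead f by rewrite mleadM // mleadXm lg.
have g'I : prefix_ideal k g' by apply: prefix_idealMl.
pose f' := f - (mleadc f / mleadc g') *: g'.
have -> : f = f' + (mleadc f / mleadc g') *: g' by rewrite /f' subrK.
apply: prefix_idealD; last exact: prefix_idealZ.
have [->|f'n0] := eqVneq f' 0; first exact: prefix_ideal0.
apply: (IH (mlead f')) => //; last first.
  by apply: prefix_idealD fI _; rewrite -scaleNr; apply/prefix_idealS/prefix_idealZ.
have f'le : (mlead f' <= mlead f)%O.
  apply: le_trans (mleadB_le _ _) _; rewrite leUidr.
  by apply: le_trans (mleadZ_le _ _) _; rewrite lg'.
rewrite -ef lt_neqAle f'le andbT; apply: contra f'n0 => /eqP ef'.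
rewrite -mleadc_eq0 ef' mcoeffB mcoeffZ -lg' divfK ?subrr //.
by rewrite mleadc_eq0.
Qed.

Lemma prefix_ideal_stationary : exists k, prefix_ideal k (q k).
Proof.
apply: NNPP => never.
have new_lead k : exists m, lead_ideal k.+1 m /\ ~ lead_ideal k m.
  apply: NNPP => no_new; apply: never; exists k.
  apply: prefix_ideal_step (prefix_ideal_gen k) => m mI.
  by apply: NNPP => mN; apply: no_new; exists m.
have [ms ms_new] := functional_choice _ new_lead.
have [i [j [ij le_ij]]] := dickson ms.
case: (ms_new j) => _; apply; apply: lead_idealS le_ij.
exact: lead_ideal_mono ij (proj1 (ms_new i)).
Qed.

End HilbertBasis.

Section ZariskiTopology.
Variables (K : closedFieldType) (n : nat).
Implicit Types (C W Y Z : pset K n) (x : vec K n).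

Definition equations C (cC : zclosed C) : {mpoly K[n]} -> Prop :=
  proj1_sig (constructive_indefinite_description _ cC).

Lemma equations_homog C (cC : zclosed C) p :
  equations cC p -> exists d : nat, p \is [in K[n], d.-homog].
Proof. exact: (proj1 (proj2_sig (constructive_indefinite_description _ cC))). Qed.

Lemma equationsP C (cC : zclosed C) x :
  C x <-> (exists i, x i != 0) /\ forall p, equations cC p -> meval x p = 0.
Proof. exact: (proj2 (proj2_sig (constructive_indefinite_description _ cC))). Qed.

Lemma equationsPn C (cC : zclosed C) x : (exists i, x i != 0) -> ~ C x ->
  exists p, equations cC p /\ meval x p != 0.
Proof.
move=> xn0 Cxn; apply: NNPP => all0; apply/Cxn/(equationsP cC); split=> // p ep.
by apply/eqP; apply: NNPP => px; apply: all0; exists p; split=> //; apply/negP.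
Qed.

Lemma zclosed0 : zclosed (fun _ : vec K n => False).
Proof.
exists (eq^~ 1); split=> [p ->|x]; first by exists 0%N; apply: dhomog1.
split=> // [[_ /(_ 1 erefl)]]; rewrite meval1 => /eqP; by rewrite oner_eq0.
Qed.

Lemma zclosedI C1 C2 : zclosed C1 -> zclosed C2 -> zclosed (fun x => C1 x /\ C2 x).
Proof.
move=> c1 c2; exists (fun p => equations c1 p \/ equations c2 p); split.
  by move=> p [/equations_homog | /equations_homog].
move=> x; split.
  by move=> [/(equationsP c1) [xn0 h1] /(equationsP c2) [_ h2]]; split=> // p [/h1 | /h2].
move=> [xn0 h]; split; [apply/(equationsP c1) | apply/(equationsP c2)].
  by split=> // p ep; apply: h; left.
by split=> // p ep; apply: h; right.
Qed.

Lemma zclosedU C1 C2 : zclosed C1 -> zclosed C2 -> zclosed (fun x => C1 x \/ C2 x).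
Proof.
move=> c1 c2.
exists (fun p => exists p1 p2, [/\ equations c1 p1, equations c2 p2 & p = p1 * p2]).
split=> [p [p1 [p2 [/equations_homog [d1 h1] /equations_homog [d2 h2] ->]]]|x].
  by exists (d1 + d2)%N; apply: dhomogM.
split=> [Cx | [xn0 h]].
  have xn0 : exists i, x i != 0 by case: Cx => [/(equationsP c1) | /(equationsP c2)] [].
  split=> // p [p1 [p2 [e1 e2 ->]]]; rewrite mevalM.
  case: Cx => [/(equationsP c1) [_ h] | /(equationsP c2) [_ h]].
    by rewrite (h _ e1) mul0r.
  by rewrite (h _ e2) mulr0.
have [C1x|C1xn] := classic (C1 x); [by left | right].
have [p1 [e1 p1x]] := equationsPn c1 xn0 C1xn.
apply/(equationsP c2); split=> // p2 e2; apply/eqP.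
have /eqP := h (p1 * p2) (ex_intro _ p1 (ex_intro _ p2 (And3 e1 e2 erefl))).
by rewrite mevalM mulf_eq0 (negbTE p1x).
Qed.

Lemma zclosure_closed (A : pset K n) : zclosed (zclosure A).
Proof.
exists (fun p => exists C (cC : zclosed C), psubset A C /\ equations cC p); split.
  by move=> p [C [cC [_ /equations_homog]]].
move=> x; split=> [[xn0 Ax] | [xn0 h]]; split=> //.
  by move=> p [C [cC [AC /(proj2 (proj1 (equationsP cC x) (Ax C cC AC)))]]].
by move=> C cC AC; apply/(equationsP cC); split=> // p ep; apply: h; exists C, cC.
Qed.

(* Hilbert's basis theorem: pick, along a strict descending chain, equations
   of [c k.+1] not vanishing on [c k]; one of them lies in the ideal of the
   previous ones, which all vanish on [c k]. *)
Lemma zclosed_descending_chain (c : nat -> pset K n) :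
  (forall k, zclosed (c k)) -> (forall k, psubset (c k.+1) (c k)) ->
  exists k, psubset (c k) (c k.+1).
Proof.
move=> cl csub; apply: NNPP => strict.
have cmono : {homo c : j k / (j <= k)%N >-> psubset k j}.
  by apply: homo_leq => // [C|C1 C2 C3 h1 h2 x /h2 /h1].
have new_eq k : exists p, equations (cl k.+1) p /\ exists2 x, c k x & meval x p != 0.
  apply: NNPP => no_eq; apply: strict; exists k => x ckx.
  have [xn0 _] := proj1 (equationsP (cl k) x) ckx.
  apply: NNPP => xn; have [p [ep px]] := equationsPn (cl k.+1) xn0 xn.
  by apply: no_eq; exists p; split=> //; exists x.
have [q q_new] := functional_choice _ new_eq.
have [k [a qk]] := prefix_ideal_stationary q.
have [_ [x ckx]] := q_new k; apply/negP/negPn/eqP.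
rewrite qk (@raddf_sum _ _ (meval x)) big1_seq // => j.
rewrite mem_index_iota => /andP [_ jk]; apply: etrans (mevalM x (a j) (q j)) _.
have /(equationsP (cl j.+1)) [_ vanish] := cmono _ _ jk x ckx.
by rewrite (vanish _ (proj1 (q_new j))) mulr0.
Qed.

Lemma zclosed_ind (P : pset K n -> Prop) :
  (forall W, zclosed W ->
     (forall W', zclosed W' -> psubset W' W -> ~ psubset W W' -> P W') -> P W) ->
  forall W, zclosed W -> P W.
Proof.
move=> IH W0 cW0; apply: NNPP => nPW0.
pose bad := {W | zclosed W /\ ~ P W}.
have smaller (W : bad) : exists W' : bad,
    psubset (sval W') (sval W) /\ ~ psubset (sval W) (sval W').
  case: W => W [cW nPW] /=; apply: NNPP => none; apply/nPW/IH => // W' cW' W'W WW'.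
  by apply: NNPP => nPW'; apply: none; exists (exist _ W' (conj cW' nPW')).
have [next next_lt] := functional_choice _ smaller.
pose chain k := iter k next (exist _ W0 (conj cW0 nPW0)).
have [k] := @zclosed_descending_chain (sval \o chain)
  (fun k => proj1 (svalP (chain k))) (fun k => proj1 (next_lt (chain k))).
exact: (proj2 (next_lt (chain k))).
Qed.

Lemma zclosed_irreducible_cover W : zclosed W -> exists s : list (pset K n),
  (forall Y, List.In Y s -> [/\ zclosed Y, irreducible Y & psubset Y W]) /\
  (forall x, W x -> exists2 Y, List.In Y s & Y x).
Proof.
move: W; apply: zclosed_ind => W cW IH.
have [[y Wy] | W0] := classic (exists y, W y); last first.
  by exists [::]; split=> // x Wx; case: W0; exists x.
have [Wirr | Wred] := classic (irreducible W).
  exists [:: W]; split=> [Y [<-|[]] // | x Wx]; last by exists W => //; left.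
  by split=> // x.
have [C1 [C2 [c1 c2 [WC WC1n WC2n]]]] : exists C1 C2, [/\ zclosed C1, zclosed C2 &
    [/\ psubset W (fun x => C1 x \/ C2 x), ~ psubset W C1 & ~ psubset W C2]].
  apply: NNPP => split_none; apply: Wred; split=> [|D1 D2 d1 d2 WD]; first by exists y.
  have [WD1 | WD1n] := classic (psubset W D1); first by left.
  have [WD2 | WD2n] := classic (psubset W D2); first by right.
  by case: split_none; exists D1, D2.
have cover_part C : zclosed C -> ~ psubset W C -> exists s : list (pset K n),
    (forall Y, List.In Y s -> [/\ zclosed Y, irreducible Y & psubset Y W]) /\
    (forall x, W x -> C x -> exists2 Y, List.In Y s & Y x).
  move=> cC WCn; have [|||s [s_ok s_cov]] := IH (fun x => W x /\ C x).
  - exact: zclosedI.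
  - by move=> x [].
  - by move=> WWC; apply: WCn => x /WWC [].
  exists s; split=> [Y /s_ok [cY iY YWC] | x Wx Cx]; last exact: s_cov.
  by split=> // x /YWC [].
have [s1 [s1_ok s1_cov]] := cover_part C1 c1 WC1n.
have [s2 [s2_ok s2_cov]] := cover_part C2 c2 WC2n.
exists (s1 ++ s2); split=> [Y /List.in_app_iff [/s1_ok | /s2_ok] // | x Wx].
have [C1x | C2x] := WC x Wx.
  by have [Y ? ?] := s1_cov x Wx C1x; exists Y => //; apply/List.in_app_iff; left.
by have [Y ? ?] := s2_cov x Wx C2x; exists Y => //; apply/List.in_app_iff; right.
Qed.

Definition list_union (s : list (pset K n)) (P : pset K n -> Prop) : pset K n :=
  fun x => exists Y, [/\ List.In Y s, P Y & Y x].

Lemma zclosed_ext C C' : (forall x, C x <-> C' x) -> zclosed C -> zclosed C'.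
Proof. by move=> CC' [E [Ehomog EC]]; exists E; split=> // x; rewrite -CC'. Qed.

Lemma list_union_cons Y0 s P x : list_union (Y0 :: s) P x <->
  (P Y0 /\ Y0 x) \/ list_union s P x.
Proof.
split=> [[Y [[<-|sY] PY Yx]] | [[PY0 Y0x] | [Y [sY PY Yx]]]].
- by left.
- by right; exists Y.
- by exists Y0; split=> //; left.
- by exists Y; split=> //; right.
Qed.

Lemma zclosed_list_union s P :
  (forall Y, List.In Y s -> zclosed Y) -> zclosed (list_union s P).
Proof.
elim: s => [|Y0 s IHs] cs.
  by apply: zclosed_ext zclosed0 => x; split=> // [[Y [[]]]].
apply: zclosed_ext (fun x => iff_sym (list_union_cons Y0 s P x)) _.
have cs' : forall Y, List.In Y s -> zclosed Y by move=> Y sY; apply: cs; right.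
have [PY0 | PY0n] := classic (P Y0).
  apply: zclosed_ext (zclosedU (cs Y0 (or_introl erefl)) (IHs cs')) => x.
  by split=> [[Y0x | rest] | [[_ Y0x] | rest]]; [left | right | left | right].
apply: zclosed_ext (IHs cs') => x.
by split=> [rest | [[PY0 _] | rest]]; [right | case: PY0n | ].
Qed.

Lemma irreducible_sub_list_union Y s P : irreducible Y ->
  (forall Y', List.In Y' s -> zclosed Y') -> psubset Y (list_union s P) ->
  exists Y', [/\ List.In Y' s, P Y' & psubset Y Y'].
Proof.
move=> irrY; elim: s => [|Y0 s IHs] cs Ys.
  by case: irrY => [[y /Ys [? [[]]]]].
have cs' : forall Y', List.In Y' s -> zclosed Y' by move=> Y' sY'; apply: cs; right.
have [PY0 | PY0n] := classic (P Y0).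
  have Ysplit : psubset Y (fun y => Y0 y \/ list_union s P y).
    by move=> y /Ys /list_union_cons [[_ ?] | ?]; [left | right].
  have [YY0 | Yrest] :=
    proj2 irrY _ _ (cs Y0 (or_introl erefl)) (zclosed_list_union P cs') Ysplit.
    by exists Y0; split=> //; left.
  by have [Y' [sY' PY' YY']] := IHs cs' Yrest; exists Y'; split=> //; right.
have [|Y' [sY' PY' YY']] := IHs cs'; last by exists Y'; split=> //; right.
by move=> y /Ys /list_union_cons [[]|].
Qed.

Lemma irr_component_complement W Y : zclosed W -> irr_component W Y ->
  exists Z, [/\ zclosed Z, psubset W (fun x => Y x \/ Z x) & ~ psubset Y Z].
Proof.
move=> cW [cY [irrY [YW Ymax]]].
have [s [s_ok s_cov]] := zclosed_irreducible_cover cW.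
have cs Y' : List.In Y' s -> zclosed Y' by case/s_ok.
exists (list_union s (fun Y' => ~ psubset Y Y')); split.
- exact: zclosed_list_union.
- move=> x /s_cov [Y' sY' Y'x].
  have [YY' | YY'n] := classic (psubset Y Y'); last by right; exists Y'.
  by have [cY' iY' Y'W] := s_ok Y' sY'; left; apply: Ymax Y'x.
- by move=> /(irreducible_sub_list_union irrY cs) [Y' [_ YY'n YY']].
Qed.
End ZariskiTopology.

Section ProjectiveSpace.
Variables (K : closedFieldType) (n : nat).
Implicit Types (C Y Z : pset K n) (x y : vec K n).

Lemma meval_scale x c d (p : {mpoly K[n]}) :
  p \is [in K[n], d.-homog] -> meval (fun i => c * x i) p = c ^+ d * meval x p.
Proof.
move=> /dhomog_mf p_homog; rewrite !mevalE mulr_sumr; apply: eq_big_seq => m pm.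
rewrite mulrCA; congr (_ * _).
under eq_bigr do rewrite exprMn.
by rewrite big_split /= prodrXr -(p_homog m pm) -mdegE.
Qed.

Lemma zclosed_scale C x c : zclosed C -> C x -> c != 0 -> C (fun i => c * x i).
Proof.
move=> cC /(equationsP cC) [[i xi] vanish] cn0; apply/(equationsP cC); split.
  by exists i; rewrite mulf_neq0.
move=> p ep; have [d p_homog] := equations_homog ep.
by rewrite (meval_scale _ _ p_homog) vanish ?mulr0.
Qed.

Lemma proj_sym x y : proj x y -> proj y x.
Proof.
move=> [[i xi] [c [cn0 yx]]]; split; first by exists i; rewrite yx mulf_neq0.
exists c^-1; split; first by rewrite invr_eq0.
by move=> j; rewrite yx mulrA mulVf ?mul1r.
Qed.

Lemma zclosed_proj C x y : zclosed C -> proj x y -> C x -> C y.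
Proof.
move=> cC [_ [c [cn0 yx]]] Cx.
by rewrite (functional_extensionality _ _ yx); apply: zclosed_scale.
Qed.

Lemma zclosure_subset (A : pset K n) C :
  zclosed C -> psubset A C -> psubset A (zclosure A).
Proof.
move=> cC AC x Ax; split=> [|C' cC' AC']; last exact: AC'.
by case/(equationsP cC): (AC x Ax).
Qed.

Lemma meval_curve (p : 'I_n -> {poly K}) (q : {mpoly K[n]}) :
  exists H : {poly K}, forall s, H.[s] = meval (fun i => (p i).[s]) q.
Proof.
exists (\sum_(m <- msupp q) (q@_m)%:P * \prod_(i < n) (p i) ^+ m i) => s.
rewrite mevalE horner_sum; apply: eq_bigr => m _.
by rewrite hornerE horner_prod; congr (_ * _); apply: eq_bigr => i _; rewrite horner_exp.
Qed.

Lemma exists_nonzero_nonroot (P : {poly K}) : P != 0 -> exists2 s, s != 0 & P.[s] != 0.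
Proof.
move=> Pn0; have /closed_nonrootP [s] : 'X * P != 0 by rewrite mulf_neq0 ?polyX_eq0.
by rewrite /root hornerE hornerX mulf_eq0 negb_or => /andP [? ?]; exists s.
Qed.

(* An equation of [Z] nonvanishing at [s0] and any equation of [Y] have a
   product vanishing on the punctured curve, so the latter vanishes identically. *)
Lemma curve_mem_of_cover Y Z (p : 'I_n -> {poly K}) s0 :
  zclosed Y -> zclosed Z -> (forall a, exists i, (p i).[a] != 0) ->
  (forall a, a != 0 -> Y (fun i => (p i).[a]) \/ Z (fun i => (p i).[a])) ->
  ~ Z (fun i => (p i).[s0]) -> forall s, Y (fun i => (p i).[s]).
Proof.
move=> cY cZ pn0 cover Zs0n s.
have [q [eq qs0]] := equationsPn cZ (pn0 s0) Zs0n.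
have [G eG] := meval_curve p q.
have Gn0 : G != 0 by apply: contraNneq qs0 => G0; rewrite -eG G0 horner0.
apply/(equationsP cY); split=> // q' eq'.
have [H eH] := meval_curve p q'.
rewrite -eH; suff -> : H = 0 by rewrite horner0.
apply/eqP; apply: contraT => Hn0.
have [a an0] := exists_nonzero_nonroot (mulf_neq0 Gn0 Hn0).
rewrite hornerM eG eH; case: (cover a an0) => [/(equationsP cY) | /(equationsP cZ)] [_ vanish].
  by rewrite (vanish _ eq') mulr0 eqxx.
by rewrite (vanish _ eq) mul0r eqxx.
Qed.

End ProjectiveSpace.

Section OneParameterSubgroup.
Variables (K : closedFieldType) (n r : nat) (w : 'I_n -> 'I_r -> int).
Variables (lam : 'I_r -> int).

Lemma Sof_torus (s : K) : s != 0 -> torus_elt (Sof lam s).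
Proof. by move=> sn0 j; rewrite /Sof expfz_neq0. Qed.

Lemma act_SofM (s s' : K) (x : vec K n) :
  act w (Sof lam s) (act w (Sof lam s') x) = act w (Sof lam (s * s')) x.
Proof.
apply: functional_extensionality => i; rewrite /act mulrA; congr (_ * _).
by rewrite /chi -big_split /=; apply: eq_bigr => j _; rewrite /Sof !expfzMl.
Qed.

Lemma act_Sof1 (x : vec K n) : act w (Sof lam 1) x = x.
Proof.
apply: functional_extensionality => i.
by rewrite /act /chi big1 ?mul1r // => j _; rewrite /Sof !exp1rz.
Qed.

Variable X : pset K n.
Hypothesis X_inv : forall t x, torus_elt t -> X x -> X (act w t x).

(* Reparametrize the limit curve by [s' |-> s' * s]. *)
Lemma BBstratum_act f z (s : K) :
  s != 0 -> BBstratum w lam X f z -> BBstratum w lam X f (act w (Sof lam s) z).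
Proof.
move=> sn0 [Xz [p [pn0 [porb pf]]]].
split; first by apply: X_inv => //; apply: Sof_torus.
have ps i s' : ((p i) \Po ('X * s%:P)).[s'] = (p i).[s' * s].
  by rewrite horner_comp !hornerE.
exists (fun i => (p i) \Po ('X * s%:P)); split=> [a|].
  by have [i] := pn0 (a * s); exists i; rewrite ps.
split=> [s' s'n0|]; rewrite (functional_extensionality _ _ (ps ^~ _)).
  by rewrite act_SofM; apply/porb/mulf_neq0.
by rewrite mul0r.
Qed.

End OneParameterSubgroup.

Section SupportingFixedPoints.
Variables (K : closedFieldType) (n r : nat) (w : 'I_n -> 'I_r -> int).
Variables (lam : 'I_r -> int) (X : pset K n).
Hypothesis cX : zclosed X.

Lemma supporting_of_irr_component Y f :
  irr_component X Y -> supporting w lam Y f -> supporting w lam X f.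
Proof.
move=> Ycomp [[Yf Tf] [U [[C [cC U_def]] [[u Uu] UYf]]]].
have [Z [cZ XYZ YZn]] := irr_component_complement cX Ycomp.
case: Ycomp => cY [irrY [YX _]].
split; first by split=> //; apply: YX.
exists (fun x => X x /\ ~ (C x \/ Z x)); split.
  by exists (fun x => C x \/ Z x); split=> //; apply: zclosedU.
split.
  have [y Yy CZyn] : exists2 y, Y y & ~ (C y \/ Z y).
    apply: NNPP => none.
    have YCZ : psubset Y (fun y => C y \/ Z y).
      by move=> y Yy; apply: NNPP => CZyn; apply: none; exists y.
    have [YC|//] := proj2 irrY _ _ cC cZ YCZ.
    by have [Yu Cun] := proj1 (U_def u) Uu; apply: Cun (YC u Yu).
  by exists y; split=> //; apply: YX.
move=> x [Xx CZxn].
have Yx : Y x by case: (XYZ x Xx) => // Zx; case: CZxn; right.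
have [_ limx] := UYf x (proj2 (U_def x) (conj Yx (fun Cx => CZxn (or_introl Cx)))).
by split.
Qed.

Hypothesis X_inv : forall t x, torus_elt t -> X x -> X (act w t x).

Lemma irr_component_closure_BBstratum_mem f Y :
  irr_component (zclosure (BBstratum w lam X f)) Y -> Y f.
Proof.
move=> Ycomp; have [Z [cZ WYZ YZn]] := irr_component_complement (zclosure_closed _) Ycomp.
case: Ycomp => [cY [_ [YW _]]].
have [a [Xfa Zan]] : exists a, BBstratum w lam X f a /\ ~ Z a.
  apply: NNPP => none; apply: YZn => y /YW [_]; apply=> // z Xfz.
  by apply: NNPP => Zzn; apply: none; exists z.
have Xf_closure := zclosure_subset cX (fun z (Xfz : BBstratum w lam X f z) => proj1 Xfz).
case: (Xfa) => _ [p [pn0 [porb pf]]].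
apply: (zclosed_proj cY (proj_sym pf)).
apply: (curve_mem_of_cover (s0 := 1) cY cZ pn0) => [s sn0 | Z1].
  apply/WYZ/(zclosed_proj (zclosure_closed _) (porb s sn0)).
  exact/Xf_closure/BBstratum_act.
by apply: Zan; have := zclosed_proj cZ (proj_sym (porb 1 (oner_neq0 _))) Z1; rewrite act_Sof1.
Qed.

End SupportingFixedPoints.

Theorem lemma3p3 (K : closedFieldType) (n r : nat) (w : 'I_n -> 'I_r -> int)
    (lam : 'I_r -> int) (X : pset K n) :
  zclosed X ->
  (forall t x, torus_elt t -> X x -> X (act w t x)) ->
  pfinite (Tfixed w X) ->
  (forall f, Sfixed w lam X f <-> Tfixed w X f) ->
  (forall Y, irr_component X Y ->
     forall f, supporting w lam Y f -> supporting w lam X f) /\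
  (forall f, Tfixed w X f ->
     forall Y, irr_component (zclosure (BBstratum w lam X f)) Y -> Y f).
Proof.
move=> cX X_inv _ _; split=> [Y Ycomp f | f _ Y].
  exact: supporting_of_irr_component.
exact: irr_component_closure_BBstratum_mem.
Qed.
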